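(* Each of the endofunctors $M\otimes-$ and $N\otimes-$ on $\mathsf{SquaMS}$ has an initial algebra, whose carrier is the colimit in $\mathsf{SquaMS}$ of the initial $\omega$-chain $M_0\to P\otimes M_0\to P^2\otimes M_0\to\cdots$ (for $P=M$, resp. $P=N$), where $M_0$ carries the path metric.
   Context: Let $M_0=\{(r,s)\in[0,1]^2: r\in\{0,1\}\text{ or } s\in\{0,1\}\}$. A square metric space is a pair $(X,S_X)$ with $X$ a metric space with all distances at most $2$ and $S_X\colon M_0\to X$ injective such that (sq1) for $i\in\{0,1\}$, $r,s\in[0,1]$: $d_X(S_X(i,r),S_X(i,s))=|s-r|$ and $d_X(S_X(r,i),S_X(s,i))=|s-r|$; (sq2) $d_X(S_X(r,s),S_X(t,u))\ge|r-t|+|s-u|$. $\mathsf{SquaMS}$: these objects, with short maps $f$ satisfying $f\circ S_X=S_Y$ as morphisms. The path metric on $M_0$ is the shortest-path (arc length) distance along the boundary; $(M_0,\mathrm{id})$ with it is a square metric space. Let $N=\{0,1,2\}^2$, $M=N\setminus\{(1,1)\}$, also viewed as points of $\mathbb{R}^2$. For $P\in\{M,N\}$ and $X$ in $\mathsf{SquaMS}$, $P\otimes X=(P\times X)/\!\sim$, where $\sim$ is generated by $(m,S_X(p))\sim(n,S_X(q))$ whenever $m,n\in P$ differ by exactly $1$ in exactly one coordinate and $(m+p)/3=(n+q)/3$ in $\mathbb{R}^2$; $m\otimes x$ is the class of $(m,x)$. With $d((a,u),(b,v))=\frac13 d_X(u,v)$ if $a=b$ and $2$ otherwise, $P\otimes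 X$ gets the quotient metric (infimum over finite chains of sums of consecutive distances, $\sim$-related consecutive pairs counting $0$). $S_{P\otimes X}(p)=m\otimes S_X(3p-m)$ for any $m\in P$ with $p\in(m+[0,1]^2)/3$; $(P\otimes f)(m\otimes x)=m\otimes f(x)$. $P^{k+1}\otimes X=P\otimes(P^k\otimes X)$. The initial chain maps are $!=S_{P\otimes M_0}\colon M_0\to P\otimes M_0$ and $P^k\otimes !$. An algebra for $F$ is $(A,a\colon FA\to A)$; an initial algebra is initial among algebras and algebra morphisms. *)

From Stdlib Require Import Reals Lra ClassicalEpsilon.
From Coquelicot Require Import Rbar Lub.
Open Scope R_scope.

Definition inM0 (r s : R) : Prop :=
  0 <= r <= 1 /\ 0 <= s <= 1 /\ (r = 0 \/ r = 1 \/ s = 0 \/ s = 1).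

Definition M0pt : Type := {p : R * R | inM0 (fst p) (snd p)}.

(* perimeter (arc-length) parameter in [0,4) *)
Definition perim (r s : R) : R :=
  if Req_EM_T s 0 then r
  else if Req_EM_T r 1 then 1 + s
  else if Req_EM_T s 1 then 3 - r
  else 4 - s.

Definition path_dist (p q : R * R) : R :=
  let t := Rabs (perim (fst p) (snd p) - perim (fst q) (snd q)) in Rmin t (4 - t).

(* ---------- Raw "pre-square" structures ----------
   A carrier, a distance function and the map S (total on R*R, only
   meaningful on the points of M0). *)
Record PreSq : Type := {
  car : Type;
  dist : car -> car -> R;
  Smap : R -> R -> car
}.

Definition is_metric (X : PreSq) : Prop :=
  (forall x y, 0 <= dist X x y) /\
  (forall x, dist X x x = 0) /\
  (forall x y, dist X x y = 0 -> x = y) /\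
  (forall x y, dist X x y = dist X y x) /\
  (forall x y z, dist X x z <= dist X x y + dist X y z).

Definition is_squams (X : PreSq) : Prop :=
  is_metric X /\
  (forall x y, dist X x y <= 2) /\
  (forall r s t u, inM0 r s -> inM0 t u -> Smap X r s = Smap X t u -> r = t /\ s = u) /\
  (forall (i r s : R), (i = 0 \/ i = 1) -> 0 <= r <= 1 -> 0 <= s <= 1 ->
      dist X (Smap X i r) (Smap X i s) = Rabs (s - r) /\
      dist X (Smap X r i) (Smap X s i) = Rabs (s - r)) /\
  (forall r s t u, inM0 r s -> inM0 t u ->
      Rabs (r - t) + Rabs (s - u) <= dist X (Smap X r s) (Smap X t u)).

Definition short (X Y : PreSq) (f : car X -> car Y) : Prop :=
  forall x y, dist Y (f x) (f y) <= dist X x y.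

Definition is_hom (X Y : PreSq) (f : car X -> car Y) : Prop :=
  short X Y f /\ (forall r s, inM0 r s -> f (Smap X r s) = Smap Y r s).

Definition M0_00 : inM0 0 0.
Proof. unfold inM0; repeat split; try lra; auto. Qed.

Definition M0S (r s : R) : M0pt :=
  match excluded_middle_informative (inM0 r s) with
  | left H => exist (fun p : R * R => inM0 (fst p) (snd p)) (r, s) H
  | right _ => exist (fun p : R * R => inM0 (fst p) (snd p)) (0, 0) M0_00
  end.

Definition M0obj : PreSq := {|
  car := M0pt;
  dist := fun p q => path_dist (proj1_sig p) (proj1_sig q);
  Smap := M0S
|}.

Record Shape : Type := {
  inP : nat * nat -> bool;
  inP00 : inP (0%nat, 0%nat) = true
}.

Definition inN (m : nat * nat) : bool :=
  (Nat.ltb (fst m) 3 && Nat.ltb (snd m) 3)%bool.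
Definition inM (m : nat * nat) : bool :=
  (inN m && negb (Nat.eqb (fst m) 1 && Nat.eqb (snd m) 1))%bool.

Definition shapeN : Shape := {| inP := inN; inP00 := eq_refl |}.
Definition shapeM : Shape := {| inP := inM; inP00 := eq_refl |}.

Definition Pt (P : Shape) : Type := {m : nat * nat | inP P m = true}.

Definition mkPt (P : Shape) (m : nat * nat) : Pt P :=
  match inP P m as b return inP P m = b -> Pt P with
  | true => fun H => exist _ m H
  | false => fun _ => exist _ (0%nat, 0%nat) (inP00 P)
  end eq_refl.

Definition cidx (r : R) : nat :=
  if Rlt_dec r (1/3) then 0%nat else if Rlt_dec r (2/3) then 1%nat else 2%nat.

Definition adjacent (m n : nat * nat) : Prop :=
  (fst m = fst n /\ (snd m = S (snd n) \/ snd n = S (snd m))) \/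
  (snd m = snd n /\ (fst m = S (fst n) \/ fst n = S (fst m))).

Section Tensor.
Variables (P : Shape) (X : PreSq).

Definition Tcar : Type := (Pt P * car X)%type.

Definition gen (u v : Tcar) : Prop :=
  let m := proj1_sig (fst u) in let n := proj1_sig (fst v) in
  exists p1 p2 q1 q2, inM0 p1 p2 /\ inM0 q1 q2 /\
    snd u = Smap X p1 p2 /\ snd v = Smap X q1 q2 /\ adjacent m n /\
    (INR (fst m) + p1) / 3 = (INR (fst n) + q1) / 3 /\
    (INR (snd m) + p2) / 3 = (INR (snd n) + q2) / 3.

Definition dpre (u v : Tcar) : R :=
  let m := proj1_sig (fst u) in let n := proj1_sig (fst v) in
  if (Nat.eqb (fst m) (fst n) && Nat.eqb (snd m) (snd n))%bool
  then dist X (snd u) (snd v) / 3 else 2.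

Definition step (u v : Tcar) (c : R) : Prop :=
  c = dpre u v \/ (c = 0 /\ (gen u v \/ gen v u)).

Inductive chainsum : Tcar -> Tcar -> R -> Prop :=
| chain1 u v c : step u v c -> chainsum u v c
| chainS u w v c1 c2 : step u w c1 -> chainsum w v c2 -> chainsum u v (c1 + c2).

Definition tdist (u v : Tcar) : R := real (Glb_Rbar (chainsum u v)).

Definition tS (r s : R) : Tcar :=
  let m := (cidx r, cidx s) in
  (mkPt P m, Smap X (3 * r - INR (fst m)) (3 * s - INR (snd m))).

Definition tensor : PreSq := {| car := Tcar; dist := tdist; Smap := tS |}.
End Tensor.

Definition tmap (P : Shape) (X Y : PreSq) (f : car X -> car Y)
  : car (tensor P X) -> car (tensor P Y) :=
  fun u => (fst u, f (snd u)).

Definition is_alg (P : Shape) (A : PreSq) (a : car (tensor P A) -> car A) : Prop :=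
  is_squams A /\ is_hom (tensor P A) A a.

Definition alg_hom (P : Shape) (A : PreSq) (a : car (tensor P A) -> car A)
  (B : PreSq) (b : car (tensor P B) -> car B) (h : car A -> car B) : Prop :=
  is_hom A B h /\ (forall u, h (a u) = b (tmap P A B h u)).

Definition initial_alg (P : Shape) (A : PreSq) (a : car (tensor P A) -> car A) : Prop :=
  is_alg P A a /\
  forall (B : PreSq) (b : car (tensor P B) -> car B), is_alg P B b ->
    exists h, alg_hom P A a B b h /\
      forall h', alg_hom P A a B b h' -> forall x, h' x = h x.

Fixpoint Ch (P : Shape) (k : nat) : PreSq :=
  match k with
  | O => M0obj
  | S k' => tensor P (Ch P k')
  end.

Definition bang (P : Shape) : car M0obj -> car (tensor P M0obj) :=
  fun x => Smap (tensor P M0obj) (fst (proj1_sig x)) (snd (proj1_sig x)).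

Fixpoint cmap (P : Shape) (k : nat) : car (Ch P k) -> car (Ch P (S k)) :=
  match k as k0 return car (Ch P k0) -> car (Ch P (S k0)) with
  | O => bang P
  | S k' => tmap P (Ch P k') (Ch P (S k')) (cmap P k')
  end.

Definition cocone (P : Shape) (B : PreSq) (g : forall k, car (Ch P k) -> car B) : Prop :=
  (forall k, is_hom (Ch P k) B (g k)) /\
  (forall k x, g (S k) (cmap P k x) = g k x).

Definition is_colimit (P : Shape) (A : PreSq) (g : forall k, car (Ch P k) -> car A) : Prop :=
  is_squams A /\ cocone P A g /\
  forall (B : PreSq) (h : forall k, car (Ch P k) -> car B),
    is_squams B -> cocone P B h ->
    exists u, is_hom A B u /\ (forall k x, u (g k x) = h k x) /\
      forall u', is_hom A B u' -> (forall k x, u' (g k x) = h k x) ->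
        forall y, u' y = u y.

(* The chain maps [P^k ⊗ !] are short: [!] is, because the path metric is the largest
   metric on M0 satisfying (sq1) and [P ⊗ -] preserves (sq1), and [P ⊗ -] sends short maps
   to short maps.  Hence the distances between the images of two points along the chain
   decrease, and the colimit is the set of eventually coherent sequences with the limit of
   these distances, modulo distance zero; it satisfies (sq2) because [P ⊗ -] preserves (sq2).
   Prepending a cell index makes it a [P ⊗ -]-algebra, and an algebra [(B, b)] yields a
   cocone by iterating [b] on the boundary embedding of M0; the map this cocone induces out
   of the colimit is the unique algebra morphism. *)

From Stdlib Require Import Reals Lra Lia ClassicalEpsilon FunctionalExtensionality
  PropExtensionality ProofIrrelevance Eqdep_dec.
From Coquelicot Require Import Rbar Lub.
Open Scope R_scope.

Lemma Glb_Rbar_real (E : R -> Prop) c0 :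
  E c0 -> (forall c, E c -> 0 <= c) -> is_glb_Rbar E (Finite (real (Glb_Rbar E))).
Proof.
  intros H0 Hpos. destruct (Glb_Rbar_correct E) as [Hlb Hglb].
  destruct (Glb_Rbar E) eqn:Eg; simpl.
  - split; assumption.
  - exfalso. exact (Hlb c0 H0).
  - exfalso. apply (Hglb (Finite 0)). intros x Hx. exact (Hpos x Hx).
Qed.

Lemma Glb_Rbar_real_le (E : R -> Prop) c :
  (forall c, E c -> 0 <= c) -> E c -> real (Glb_Rbar E) <= c.
Proof. intros Hpos Hc. exact (proj1 (Glb_Rbar_real E c Hc Hpos) c Hc). Qed.

Lemma Glb_Rbar_real_ge (E : R -> Prop) c0 b :
  E c0 -> (forall c, E c -> 0 <= c) -> (forall c, E c -> b <= c) -> b <= real (Glb_Rbar E).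
Proof. intros H0 Hpos Hb. exact (proj2 (Glb_Rbar_real E c0 H0 Hpos) (Finite b) Hb). Qed.

Lemma Glb_Rbar_real_le_add (E1 E2 : R -> Prop) c1 c2 b :
  E1 c1 -> E2 c2 -> (forall c, E1 c -> 0 <= c) -> (forall c, E2 c -> 0 <= c) ->
  (forall c1 c2, E1 c1 -> E2 c2 -> b <= c1 + c2) ->
  b <= real (Glb_Rbar E1) + real (Glb_Rbar E2).
Proof.
  intros H1 H2 Hpos1 Hpos2 Hb.
  assert (b - real (Glb_Rbar E1) <= real (Glb_Rbar E2)); [|lra].
  apply (Glb_Rbar_real_ge _ c2); auto. intros d2 Hd2.
  assert (b - d2 <= real (Glb_Rbar E1)); [|lra].
  apply (Glb_Rbar_real_ge _ c1); auto. intros d1 Hd1. specialize (Hb d1 d2 Hd1 Hd2). lra.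
Qed.

Lemma piecewise_le (d : R -> R -> R) (h : R) (N : nat) :
  0 <= h -> (0 < N)%nat ->
  (forall a b c, d a c <= d a b + d b c) ->
  (forall k a b, (k < N)%nat -> INR k * h <= a <= b -> b <= INR (S k) * h -> d a b <= b - a) ->
  forall a b, 0 <= a <= b -> b <= INR N * h -> d a b <= b - a.
Proof.
  intros Hh HN Htri Hpiece.
  enough (K : forall n, (n <= N)%nat -> forall a b, 0 <= a <= b -> b <= INR n * h -> d a b <= b - a)
    by (intros; apply (K N); auto).
  induction n as [|n IH]; intros Hn a b Hab Hb.
  - simpl in Hb. rewrite Rmult_0_l in Hb.
    pose proof (Hpiece 0%nat a b HN) as K. simpl in K. rewrite Rmult_0_l, Rmult_1_l in K.
    apply K; lra.
  - assert (Hnh : 0 <= INR n * h) by (apply Rmult_le_pos; [apply pos_INR | assumption]).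
    destruct (Rle_dec b (INR n * h)); [apply IH; auto; lia|].
    destruct (Rle_dec (INR n * h) a); [apply (Hpiece n); [lia | lra | lra]|].
    pose proof (Htri a (INR n * h) b).
    pose proof (IH ltac:(lia) a (INR n * h) ltac:(lra) ltac:(lra)).
    pose proof (Hpiece n (INR n * h) b ltac:(lia) ltac:(lra) ltac:(lra)). lra.
Qed.

Definition pseudometric_on {T : Type} (d : T -> T -> R) : Prop :=
  (forall x y, 0 <= d x y) /\ (forall x, d x x = 0) /\ (forall x y, d x y = d y x) /\
  (forall x y z, d x z <= d x y + d y z).

Definition pseudometric (X : PreSq) : Prop := pseudometric_on (dist X).

Definition bounded2 (X : PreSq) : Prop := forall x y, dist X x y <= 2.

Definition sq1_le (X : PreSq) : Prop :=
  forall (i r s : R), (i = 0 \/ i = 1) -> 0 <= r <= 1 -> 0 <= s <= 1 ->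
    dist X (Smap X i r) (Smap X i s) <= Rabs (s - r) /\
    dist X (Smap X r i) (Smap X s i) <= Rabs (s - r).

Definition sq2 (X : PreSq) : Prop :=
  forall r s t u, inM0 r s -> inM0 t u ->
    Rabs (r - t) + Rabs (s - u) <= dist X (Smap X r s) (Smap X t u).

Lemma squams_pseudometric X : is_squams X -> pseudometric X.
Proof. intros [[? [? [_ [? ?]]]] _]. repeat split; assumption. Qed.

Lemma squams_sq1_le X : is_squams X -> sq1_le X.
Proof. intros [_ [_ [_ [Hsq1 _]]]] i r s Hi Hr Hs. destruct (Hsq1 i r s Hi Hr Hs); lra. Qed.

Ltac case_abs := unfold Rabs, Rmin in *; repeat match goal with
  | |- context [Rcase_abs ?x] => destruct (Rcase_abs x)
  | H : context [Rcase_abs ?x] |- _ => destruct (Rcase_abs x)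
  | |- context [Rle_dec ?x ?y] => destruct (Rle_dec x y)
  | H : context [Rle_dec ?x ?y] |- _ => destruct (Rle_dec x y)
  end.

Ltac case_perim := unfold perim in *; repeat match goal with
  | |- context [Req_EM_T ?a ?b] => destruct (Req_EM_T a b)
  | H : context [Req_EM_T ?a ?b] |- _ => destruct (Req_EM_T a b)
  end.

Lemma inM0_vside c x : (c = 0 \/ c = 1) -> 0 <= x <= 1 -> inM0 c x.
Proof. intros [-> | ->] H; unfold inM0; repeat split; lra. Qed.

Lemma inM0_hside c x : (c = 0 \/ c = 1) -> 0 <= x <= 1 -> inM0 x c.
Proof. intros [-> | ->] H; unfold inM0; repeat split; lra. Qed.

Lemma perim_range r s : inM0 r s -> 0 <= perim r s < 4.
Proof. intros [Hr [Hs _]]. case_perim; lra. Qed.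

Lemma M0S_val r s : inM0 r s -> proj1_sig (M0S r s) = (r, s).
Proof.
  intros H. unfold M0S. destruct (excluded_middle_informative (inM0 r s)); [reflexivity | tauto].
Qed.

Lemma M0S_proj (x : M0pt) : M0S (fst (proj1_sig x)) (snd (proj1_sig x)) = x.
Proof.
  destruct x as [[r s] H]. unfold M0S; simpl.
  destruct (excluded_middle_informative (inM0 r s)); [|tauto].
  f_equal. apply proof_irrelevance.
Qed.

Lemma M0_pseudometric : pseudometric M0obj.
Proof.
  unfold pseudometric; simpl; unfold path_dist. repeat split.
  - intros [[a b] Ha] [[c d] Hc]; simpl in *.
    pose proof (perim_range _ _ Ha); pose proof (perim_range _ _ Hc). case_abs; lra.
  - intros [[a b] Ha]; simpl. rewrite Rminus_diag, Rabs_R0. case_abs; lra.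
  - intros [[a b] Ha] [[c d] Hc]; simpl. rewrite Rabs_minus_sym. reflexivity.
  - intros [[a b] Ha] [[c d] Hc] [[e f] He]; simpl in *.
    pose proof (perim_range _ _ Ha); pose proof (perim_range _ _ Hc);
    pose proof (perim_range _ _ He).
    set (x := perim a b) in *; set (y := perim c d) in *; set (z := perim e f) in *.
    clearbody x y z. case_abs; lra.
Qed.

Lemma M0_bounded2 : bounded2 M0obj.
Proof. intros [[a b] Ha] [[c d] Hc]; simpl; unfold path_dist; simpl. case_abs; lra. Qed.

Lemma M0_sq1_le : sq1_le M0obj.
Proof.
  intros i r s Hi Hr Hs; simpl.
  rewrite !M0S_val by (first [apply inM0_vside; assumption | apply inM0_hside; assumption]).
  unfold path_dist; simpl. destruct Hi; subst; split; case_perim; case_abs; lra.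
Qed.

Lemma M0_sq2 : sq2 M0obj.
Proof.
  intros r s t u Hrs Htu; simpl. rewrite !M0S_val by assumption. unfold path_dist; simpl.
  destruct Hrs as [Hr [Hs Hrs]], Htu as [Ht [Hu Htu]].
  destruct Hrs as [-> | [-> | [-> | ->]]]; destruct Htu as [-> | [-> | [-> | ->]]];
  case_perim; case_abs; lra.
Qed.

Definition arc_x t :=
  if Rle_dec t 1 then t else if Rle_dec t 2 then 1 else if Rle_dec t 3 then 3 - t else 0.
Definition arc_y t :=
  if Rle_dec t 1 then 0 else if Rle_dec t 2 then t - 1 else if Rle_dec t 3 then 1 else 4 - t.

Ltac unfold_arc := unfold arc_x, arc_y; case_abs; split; lra.

Lemma arc_bottom t : 0 <= t <= 1 -> arc_x t = t /\ arc_y t = 0.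
Proof. intros; unfold_arc. Qed.
Lemma arc_right t : 1 <= t <= 2 -> arc_x t = 1 /\ arc_y t = t - 1.
Proof. intros; unfold_arc. Qed.
Lemma arc_top t : 2 <= t <= 3 -> arc_x t = 3 - t /\ arc_y t = 1.
Proof. intros; unfold_arc. Qed.
Lemma arc_left t : 3 <= t <= 4 -> arc_x t = 0 /\ arc_y t = 4 - t.
Proof. intros; unfold_arc. Qed.

Lemma arc_perim r s : inM0 r s -> arc_x (perim r s) = r /\ arc_y (perim r s) = s.
Proof.
  intros [Hr [Hs H]]. unfold arc_x, arc_y.
  destruct H as [-> | [-> | [-> | ->]]]; case_perim; case_abs; split; lra.
Qed.

Section PathMetricMaximal.
Variables (X : PreSq) (HX : pseudometric X) (Hsq1 : sq1_le X).

Let Sarc t := Smap X (arc_x t) (arc_y t).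

Lemma dist_arc_le a b : 0 <= a <= b -> b <= 4 -> dist X (Sarc a) (Sarc b) <= b - a.
Proof.
  destruct HX as [_ [_ [_ Htri]]]. intros Hab Hb.
  apply (piecewise_le (fun a b => dist X (Sarc a) (Sarc b)) 1 4);
    [lra | lia | auto | | lra | simpl; lra].
  intros k a' b' Hk Ha' Hb'. unfold Sarc.
  rewrite S_INR, !Rmult_1_r in *.
  destruct k as [|[|[|[|k]]]]; try lia; simpl in Ha', Hb'.
  - destruct (arc_bottom a') as [-> ->]; [lra|]. destruct (arc_bottom b') as [-> ->]; [lra|].
    destruct (Hsq1 0 a' b') as [_ K]; try lra. case_abs; lra.
  - destruct (arc_right a') as [-> ->]; [lra|]. destruct (arc_right b') as [-> ->]; [lra|].
    destruct (Hsq1 1 (a' - 1) (b' - 1)) as [K _]; try lra. case_abs; lra.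
  - destruct (arc_top a') as [-> ->]; [lra|]. destruct (arc_top b') as [-> ->]; [lra|].
    destruct (Hsq1 1 (3 - a') (3 - b')) as [_ K]; try lra. case_abs; lra.
  - destruct (arc_left a') as [-> ->]; [lra|]. destruct (arc_left b') as [-> ->]; [lra|].
    destruct (Hsq1 0 (4 - a') (4 - b')) as [K _]; try lra. case_abs; lra.
Qed.

Lemma dist_arc_le_compl a b : 0 <= a <= b -> b <= 4 -> dist X (Sarc a) (Sarc b) <= 4 - (b - a).
Proof.
  destruct HX as [_ [_ [Hsym Htri]]]. intros Hab Hb.
  assert (Hwrap : Sarc 4 = Sarc 0).
  { unfold Sarc. destruct (arc_left 4) as [-> ->]; [lra|].
    destruct (arc_bottom 0) as [-> ->]; [lra|]. f_equal. ring. }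
  pose proof (Htri (Sarc a) (Sarc 0) (Sarc b)).
  pose proof (dist_arc_le 0 a ltac:(lra) ltac:(lra)).
  pose proof (dist_arc_le b 4 ltac:(lra) ltac:(lra)).
  rewrite Hsym in H0. rewrite Hwrap, Hsym in H1. lra.
Qed.

Lemma dist_le_path_dist r s t u : inM0 r s -> inM0 t u ->
  dist X (Smap X r s) (Smap X t u) <= path_dist (r, s) (t, u).
Proof.
  intros Hrs Htu. destruct HX as [_ [_ [Hsym _]]].
  destruct (arc_perim r s Hrs) as [Er Es], (arc_perim t u Htu) as [Et Eu].
  pose proof (perim_range r s Hrs). pose proof (perim_range t u Htu).
  replace (Smap X r s) with (Sarc (perim r s)) by (unfold Sarc; rewrite Er, Es; reflexivity).
  replace (Smap X t u) with (Sarc (perim t u)) by (unfold Sarc; rewrite Et, Eu; reflexivity).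
  unfold path_dist; simpl. set (a := perim r s) in *; set (b := perim t u) in *.
  apply Rmin_glb; destruct (Rle_dec a b).
  - rewrite Rabs_left1 by lra. pose proof (dist_arc_le a b ltac:(lra) ltac:(lra)). lra.
  - rewrite Rabs_right, Hsym by lra. pose proof (dist_arc_le b a ltac:(lra) ltac:(lra)). lra.
  - rewrite Rabs_left1 by lra. pose proof (dist_arc_le_compl a b ltac:(lra) ltac:(lra)). lra.
  - rewrite Rabs_right, Hsym by lra. pose proof (dist_arc_le_compl b a ltac:(lra) ltac:(lra)). lra.
Qed.

End PathMetricMaximal.

Definition M0_embed (X : PreSq) (x : car M0obj) : car X :=
  Smap X (fst (proj1_sig x)) (snd (proj1_sig x)).

Lemma M0_embed_hom X : pseudometric X -> sq1_le X -> is_hom M0obj X (M0_embed X).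
Proof.
  intros HX Hsq1. split.
  - intros [[r s] Hrs] [[t u] Htu]. apply dist_le_path_dist; assumption.
  - intros r s H. unfold M0_embed. simpl. rewrite M0S_val by assumption. reflexivity.
Qed.

Lemma is_hom_comp X Y Z f g : is_hom X Y f -> is_hom Y Z g -> is_hom X Z (fun x => g (f x)).
Proof.
  intros [Hf HfS] [Hg HgS]. split.
  - intros x y. eapply Rle_trans; [apply Hg | apply Hf].
  - intros r s H. rewrite HfS, HgS by assumption. reflexivity.
Qed.

Definition has_border_cells (P : Shape) : Prop :=
  forall i j, (i < 3)%nat -> (j < 3)%nat -> (i = 0 \/ i = 2 \/ j = 0 \/ j = 2)%nat ->
    inP P (i, j) = true.

Lemma shapeM_border : has_border_cells shapeM.
Proof.
  intros i j Hi Hj H. simpl. unfold inM, inN; simpl.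
  destruct i as [|[|[|i]]]; destruct j as [|[|[|j]]]; simpl; try lia; reflexivity.
Qed.

Lemma shapeN_border : has_border_cells shapeN.
Proof.
  intros i j Hi Hj H. simpl. unfold inN; simpl.
  destruct i as [|[|[|i]]]; destruct j as [|[|[|j]]]; simpl; try lia; reflexivity.
Qed.

Lemma mkPt_val P m : inP P m = true -> proj1_sig (mkPt P m) = m.
Proof.
  intros H. unfold mkPt. generalize (@eq_refl bool (inP P m)).
  generalize (inP P m) at 2 3. intros b e. destruct b; [reflexivity | congruence].
Qed.

Lemma cidx_cases t :
  (cidx t = 0%nat /\ t < 1/3) \/ (cidx t = 1%nat /\ 1/3 <= t < 2/3) \/
  (cidx t = 2%nat /\ 2/3 <= t).
Proof.
  unfold cidx. destruct (Rlt_dec t (1/3)); [left; auto|].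
  destruct (Rlt_dec t (2/3)); right; [left | right]; split; auto; lra.
Qed.

Lemma cidx_lt t : (cidx t < 3)%nat.
Proof. destruct (cidx_cases t) as [[-> _] | [[-> _] | [-> _]]]; lia. Qed.

Lemma cidx_local t : 0 <= t <= 1 -> 0 <= 3 * t - INR (cidx t) <= 1.
Proof. intros. destruct (cidx_cases t) as [[-> ?] | [[-> ?] | [-> ?]]]; simpl; lra. Qed.

Lemma cidx_0 : cidx 0 = 0%nat.
Proof. destruct (cidx_cases 0) as [[-> ?] | [[-> ?] | [-> ?]]]; auto; lra. Qed.

Lemma cidx_1 : cidx 1 = 2%nat.
Proof. destruct (cidx_cases 1) as [[-> ?] | [[-> ?] | [-> ?]]]; auto; lra. Qed.

Lemma cidx_side i : (i = 0 \/ i = 1) ->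
  (cidx i = 0 \/ cidx i = 2)%nat /\ (3 * i - INR (cidx i) = 0 \/ 3 * i - INR (cidx i) = 1).
Proof. intros [-> | ->]; [rewrite cidx_0 | rewrite cidx_1]; simpl; split; auto; lra. Qed.

Lemma cidx_piece j t : (j < 3)%nat -> INR j / 3 <= t <= (INR j + 1) / 3 -> t <= 1 ->
  cidx t = j \/ (cidx t = S j /\ t = (INR j + 1) / 3 /\ (j < 2)%nat).
Proof.
  intros Hj Ht Ht1. destruct j as [|[|[|j]]]; try lia; simpl in Ht;
  destruct (cidx_cases t) as [[-> ?] | [[-> ?] | [-> ?]]]; auto; try lra;
  right; repeat split; auto; simpl; lra.
Qed.

Lemma piece_local j t : (j < 3)%nat -> INR j / 3 <= t <= (INR j + 1) / 3 ->
  0 <= 3 * t - INR j <= 1 /\ t <= 1.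
Proof. intros Hj Ht. destruct j as [|[|[|j]]]; simpl in Ht |- *; try lia; split; lra. Qed.

Lemma inM0_local r s : inM0 r s -> inM0 (3 * r - INR (cidx r)) (3 * s - INR (cidx s)).
Proof.
  intros [Hr [Hs H]]. pose proof (cidx_local r Hr). pose proof (cidx_local s Hs).
  split; [lra | split; [lra|]].
  destruct H as [-> | [-> | [-> | ->]]];
  [rewrite cidx_0 | rewrite cidx_1 | rewrite cidx_0 | rewrite cidx_1]; simpl; lra.
Qed.

Lemma inM0_cell P r s : has_border_cells P -> inM0 r s -> inP P (cidx r, cidx s) = true.
Proof.
  intros HP [Hr [Hs H]]. apply HP; try apply cidx_lt.
  destruct H as [-> | [-> | [-> | ->]]];
  [rewrite cidx_0 | rewrite cidx_1 | rewrite cidx_0 | rewrite cidx_1]; auto.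
Qed.

Lemma sq2_Smap_inj X : pseudometric X -> sq2 X ->
  forall p1 p2 q1 q2, inM0 p1 p2 -> inM0 q1 q2 ->
  Smap X p1 p2 = Smap X q1 q2 -> p1 = q1 /\ p2 = q2.
Proof.
  intros [_ [Hrefl _]] Hsq2 p1 p2 q1 q2 Hp Hq E.
  specialize (Hsq2 _ _ _ _ Hp Hq). rewrite E, Hrefl in Hsq2. case_abs; lra.
Qed.

Notation cell u := (proj1_sig (fst u)).

Section Tensor.
Variables (P : Shape) (X : PreSq).
Hypothesis HX : pseudometric X.

Lemma dpre_cases (u v : Tcar P X) :
  (cell u = cell v /\ dpre P X u v = dist X (snd u) (snd v) / 3) \/
  (cell u <> cell v /\ dpre P X u v = 2).
Proof.
  destruct u as [[[a b] Ha] x], v as [[[c d] Hc] y]; unfold dpre; simpl.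
  destruct (Nat.eqb_spec a c), (Nat.eqb_spec b d); simpl; subst; auto;
  right; split; congruence.
Qed.

Lemma dpre_nonneg (u v : Tcar P X) : 0 <= dpre P X u v.
Proof.
  destruct HX as [Hpos _].
  destruct (dpre_cases u v) as [[_ ->] | [_ ->]]; [specialize (Hpos (snd u) (snd v)) |]; lra.
Qed.

Lemma dpre_sym (u v : Tcar P X) : dpre P X u v = dpre P X v u.
Proof.
  destruct HX as [_ [_ [Hsym _]]].
  destruct (dpre_cases u v) as [[E1 ->] | [E1 ->]], (dpre_cases v u) as [[E2 ->] | [E2 ->]];
  congruence.
Qed.

Lemma step_nonneg (u v : Tcar P X) c : step P X u v c -> 0 <= c.
Proof. intros [-> | [-> _]]; [apply dpre_nonneg | lra]. Qed.

Lemma step_sym (u v : Tcar P X) c : step P X u v c -> step P X v u c.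
Proof. intros [-> | [-> H]]; [left; apply dpre_sym | right; tauto]. Qed.

Lemma chainsum_nonneg (u v : Tcar P X) c : chainsum P X u v c -> 0 <= c.
Proof.
  induction 1 as [u v c H | u w v c1 c2 H _ IH]; pose proof (step_nonneg _ _ _ H); lra.
Qed.

Lemma chainsum_app (u w v : Tcar P X) c1 c2 :
  chainsum P X u w c1 -> chainsum P X w v c2 -> chainsum P X u v (c1 + c2).
Proof.
  intros H1; revert v c2; induction H1; intros.
  - eapply chainS; eauto.
  - rewrite Rplus_assoc. eapply chainS; eauto.
Qed.

Lemma chainsum_rev (u v : Tcar P X) c : chainsum P X u v c -> chainsum P X v u c.
Proof.
  induction 1.
  - apply chain1, step_sym; assumption.
  - rewrite Rplus_comm. eapply chainsum_app; eauto. apply chain1, step_sym; assumption.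
Qed.

Lemma tdist_le (u v : Tcar P X) c : chainsum P X u v c -> tdist P X u v <= c.
Proof. apply Glb_Rbar_real_le, chainsum_nonneg. Qed.

Lemma tdist_ge (u v : Tcar P X) b : (forall c, chainsum P X u v c -> b <= c) -> b <= tdist P X u v.
Proof.
  apply (Glb_Rbar_real_ge _ (dpre P X u v)); [apply chain1; left |]; auto.
  apply chainsum_nonneg.
Qed.

Lemma tdist_nonneg (u v : Tcar P X) : 0 <= tdist P X u v.
Proof. apply tdist_ge, chainsum_nonneg. Qed.

Lemma tdist_le_dpre (u v : Tcar P X) : tdist P X u v <= dpre P X u v.
Proof. apply tdist_le, chain1. left; reflexivity. Qed.

Lemma tdist_same_cell (u v : Tcar P X) :
  cell u = cell v -> tdist P X u v <= dist X (snd u) (snd v) / 3.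
Proof.
  intros E. pose proof (tdist_le_dpre u v).
  destruct (dpre_cases u v) as [[_ E2] | [E2 _]]; [lra | congruence].
Qed.

Lemma tdist_gen (u v : Tcar P X) : gen P X u v -> tdist P X u v = 0.
Proof.
  intros H. apply Rle_antisym; [| apply tdist_nonneg].
  apply tdist_le, chain1. right; auto.
Qed.

Lemma tdist_sym (u v : Tcar P X) : tdist P X u v = tdist P X v u.
Proof.
  assert (K : forall u v, tdist P X v u <= tdist P X u v)
    by (intros; apply tdist_ge; intros; apply tdist_le, chainsum_rev; assumption).
  apply Rle_antisym; apply K.
Qed.

Lemma tdist_triangle (u w v : Tcar P X) : tdist P X u v <= tdist P X u w + tdist P X w v.
Proof.
  apply (Glb_Rbar_real_le_add _ _ (dpre P X u w) (dpre P X w v));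
    try (apply chain1; left; reflexivity); try apply chainsum_nonneg.
  intros c1 c2 H1 H2. apply tdist_le. eapply chainsum_app; eassumption.
Qed.

Lemma tensor_pseudometric : pseudometric (tensor P X).
Proof.
  repeat split; simpl.
  - apply tdist_nonneg.
  - intros x. apply Rle_antisym; [| apply tdist_nonneg].
    pose proof (tdist_same_cell x x eq_refl). destruct HX as [_ [Hrefl _]].
    rewrite Hrefl in H. lra.
  - apply tdist_sym.
  - apply tdist_triangle.
Qed.

Lemma tensor_bounded2 : bounded2 X -> bounded2 (tensor P X).
Proof.
  intros Hb x y; simpl. pose proof (tdist_le_dpre x y).
  destruct (dpre_cases x y) as [[_ E] | [_ E]]; rewrite E in H;
  [specialize (Hb (snd x) (snd y)) |]; lra.
Qed.

Lemma gen_glue (u w : Tcar P X) : gen P X u w \/ gen P X w u ->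
  exists a1 a2 b1 b2, inM0 a1 a2 /\ inM0 b1 b2 /\
    snd u = Smap X a1 a2 /\ snd w = Smap X b1 b2 /\
    (INR (fst (cell u)) + a1) / 3 = (INR (fst (cell w)) + b1) / 3 /\
    (INR (snd (cell u)) + a2) / 3 = (INR (snd (cell w)) + b2) / 3.
Proof.
  intros [(a1 & a2 & b1 & b2 & H) | (b1 & b2 & a1 & a2 & H)];
  exists a1, a2, b1, b2; intuition congruence.
Qed.

Hypothesis Hsq2 : sq2 X.

(* Invariant for (sq2) of [P ⊗ X], read backwards along a chain from [w] to [v = m ⊗ S q]:
   either the chain already costs 2, or [w] is within a third of its X-distance of some
   boundary point [p] of its cell, whose position in the big square is l1-close to that
   of [q]. Gluing steps preserve it because of (sq2) in X. *)
Definition sq2_bound (w v : Tcar P X) q1 q2 c : Prop :=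
  2 <= c \/ exists p1 p2, inM0 p1 p2 /\
    dist X (snd w) (Smap X p1 p2) / 3
    + Rabs ((INR (fst (cell w)) + p1) / 3 - (INR (fst (cell v)) + q1) / 3)
    + Rabs ((INR (snd (cell w)) + p2) / 3 - (INR (snd (cell v)) + q2) / 3) <= c.

Lemma sq2_bound_refl (v : Tcar P X) q1 q2 :
  inM0 q1 q2 -> snd v = Smap X q1 q2 -> sq2_bound v v q1 q2 0.
Proof.
  intros Hq Hv. right. exists q1, q2. split; [assumption|].
  rewrite Hv, !Rminus_diag, Rabs_R0. destruct HX as [_ [-> _]]. lra.
Qed.

Lemma sq2_bound_step (u w v : Tcar P X) q1 q2 c1 c2 :
  step P X u w c1 -> sq2_bound w v q1 q2 c2 -> sq2_bound u v q1 q2 (c1 + c2).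
Proof.
  intros Hstep Hw. pose proof (step_nonneg _ _ _ Hstep) as Hc1.
  destruct HX as [Hpos [Hrefl [_ Htri]]].
  destruct Hw as [Hw | (p1 & p2 & Hp & Hw)]; [left; lra|].
  pose proof (Hpos (snd w) (Smap X p1 p2)).
  destruct Hstep as [-> | [-> Hgen]].
  - destruct (dpre_cases u w) as [[Ecell ->] | [_ ->]]; [| left; case_abs; lra].
    right. exists p1, p2. split; [assumption|]. rewrite Ecell.
    pose proof (Htri (snd u) (snd w) (Smap X p1 p2)). lra.
  - destruct (gen_glue u w Hgen) as (a1 & a2 & b1 & b2 & Ha & Hb & Eu & Ew & E1 & E2).
    right. exists a1, a2. split; [assumption|].
    rewrite Eu, Hrefl, E1, E2. rewrite Ew in Hw.
    pose proof (Hsq2 _ _ _ _ Hb Hp). case_abs; lra.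
Qed.

Lemma chainsum_sq2_bound (w v : Tcar P X) c q1 q2 :
  chainsum P X w v c -> inM0 q1 q2 -> snd v = Smap X q1 q2 -> sq2_bound w v q1 q2 c.
Proof.
  intros Hc Hq Hv. induction Hc as [u v c H | u w v c1 c2 H _ IH].
  - rewrite <- (Rplus_0_r c). eapply sq2_bound_step; [eassumption|].
    apply sq2_bound_refl; assumption.
  - eapply sq2_bound_step; eauto.
Qed.

Lemma tS_cell r s : has_border_cells P -> inM0 r s -> cell (tS P X r s) = (cidx r, cidx s).
Proof. intros HP H. apply mkPt_val, inM0_cell; assumption. Qed.

Lemma tensor_sq2 : has_border_cells P -> sq2 (tensor P X).
Proof.
  intros HP r s t u Hrs Htu. simpl. apply tdist_ge. intros c Hc.
  destruct (chainsum_sq2_bound _ _ _ _ _ Hc (inM0_local _ _ Htu) eq_refl)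
    as [H2 | (p1 & p2 & Hp & Hb)];
  pose proof Hrs as [? [? _]]; pose proof Htu as [? [? _]].
  - case_abs; lra.
  - rewrite !tS_cell in Hb by assumption. simpl in Hb.
    pose proof (Hsq2 _ _ _ _ (inM0_local _ _ Hrs) Hp).
    pose proof (proj1 HX (Smap X (3 * r - INR (cidx r)) (3 * s - INR (cidx s))) (Smap X p1 p2)).
    case_abs; lra.
Qed.

Lemma tdist_path_le (A : R -> Tcar P X) (E : nat -> R -> Tcar P X) :
  (forall j t, (j < 3)%nat -> INR j / 3 <= t <= (INR j + 1) / 3 -> tdist P X (A t) (E j t) = 0) ->
  (forall j a b, (j < 3)%nat -> INR j / 3 <= a <= b -> b <= (INR j + 1) / 3 ->
     tdist P X (E j a) (E j b) <= b - a) ->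
  forall r s, 0 <= r <= 1 -> 0 <= s <= 1 -> tdist P X (A r) (A s) <= Rabs (s - r).
Proof.
  intros HA HE.
  assert (K : forall a b, 0 <= a <= b -> b <= 1 -> tdist P X (A a) (A b) <= b - a).
  { intros a b Hab Hb.
    apply (piecewise_le (fun a b => tdist P X (A a) (A b)) (1/3) 3);
      [lra | lia | intros; apply tdist_triangle | | lra | simpl; lra].
    intros j a' b' Hj Ha' Hb'. rewrite S_INR in Hb'.
    pose proof (tdist_triangle (A a') (E j a') (A b')).
    pose proof (tdist_triangle (E j a') (E j b') (A b')).
    rewrite (tdist_sym (E j b')) in H0.
    rewrite HA in H, H0 by (auto; lra).
    pose proof (HE j a' b' Hj ltac:(lra) ltac:(lra)). lra. }
  intros r s Hr Hs. destruct (Rle_dec r s).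
  - rewrite Rabs_right by lra. apply K; lra.
  - rewrite Rabs_left1, tdist_sym by lra. pose proof (K s r ltac:(lra) ltac:(lra)). lra.
Qed.

Lemma tS_vside_piece i t j : has_border_cells P -> (i = 0 \/ i = 1) -> (j < 3)%nat ->
  INR j / 3 <= t <= (INR j + 1) / 3 ->
  tdist P X (tS P X i t) (mkPt P (cidx i, j), Smap X (3 * i - INR (cidx i)) (3 * t - INR j)) = 0.
Proof.
  intros HP Hi Hj Ht. destruct (cidx_side i Hi) as [Hci Hc].
  destruct (cidx_piece j t Hj Ht (proj2 (piece_local j t Hj Ht))) as [E | (E & Et & Hj2)];
    unfold tS; cbn [fst snd]; rewrite E; [apply tensor_pseudometric|].
  apply tdist_gen. exists (3 * i - INR (cidx i)), (3 * t - INR (S j)),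
    (3 * i - INR (cidx i)), (3 * t - INR j). cbn [fst snd].
  rewrite !mkPt_val by (apply HP; lia). rewrite S_INR.
  split; [apply inM0_vside; [assumption | lra]|]. split; [apply inM0_vside; [assumption | lra]|].
  do 2 (split; [reflexivity|]). split; [left; simpl; auto | cbn [fst snd]; rewrite S_INR; lra].
Qed.

Lemma tS_hside_piece i t j : has_border_cells P -> (i = 0 \/ i = 1) -> (j < 3)%nat ->
  INR j / 3 <= t <= (INR j + 1) / 3 ->
  tdist P X (tS P X t i) (mkPt P (j, cidx i), Smap X (3 * t - INR j) (3 * i - INR (cidx i))) = 0.
Proof.
  intros HP Hi Hj Ht. destruct (cidx_side i Hi) as [Hci Hc].
  destruct (cidx_piece j t Hj Ht (proj2 (piece_local j t Hj Ht))) as [E | (E & Et & Hj2)];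
    unfold tS; cbn [fst snd]; rewrite E; [apply tensor_pseudometric|].
  apply tdist_gen. exists (3 * t - INR (S j)), (3 * i - INR (cidx i)),
    (3 * t - INR j), (3 * i - INR (cidx i)). cbn [fst snd].
  rewrite !mkPt_val by (apply HP; lia). rewrite S_INR.
  split; [apply inM0_hside; [assumption | lra]|]. split; [apply inM0_hside; [assumption | lra]|].
  do 2 (split; [reflexivity|]). split; [right; simpl; auto | cbn [fst snd]; rewrite S_INR; lra].
Qed.

Lemma tensor_sq1_le : has_border_cells P -> sq1_le X -> sq1_le (tensor P X).
Proof.
  intros HP Hsq1 i r s Hi Hr Hs. destruct (cidx_side i Hi) as [_ Hc].
  set (c := 3 * i - INR (cidx i)) in *.
  split; simpl.
  - apply (tdist_path_le (fun t => tS P X i t)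
             (fun j t => (mkPt P (cidx i, j), Smap X c (3 * t - INR j))));
      [intros; apply tS_vside_piece; assumption | | assumption ..].
    intros j a b Hj Ha Hb. eapply Rle_trans; [apply tdist_same_cell; reflexivity|]. simpl.
    destruct (piece_local j a Hj ltac:(lra)) as [Ha' _], (piece_local j b Hj ltac:(lra)) as [Hb' _].
    destruct (Hsq1 c _ _ Hc Ha' Hb') as [K _]. case_abs; lra.
  - apply (tdist_path_le (fun t => tS P X t i)
             (fun j t => (mkPt P (j, cidx i), Smap X (3 * t - INR j) c)));
      [intros; apply tS_hside_piece; assumption | | assumption ..].
    intros j a b Hj Ha Hb. eapply Rle_trans; [apply tdist_same_cell; reflexivity|]. simpl.
    destruct (piece_local j a Hj ltac:(lra)) as [Ha' _], (piece_local j b Hj ltac:(lra)) as [Hb' _].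
    destruct (Hsq1 c _ _ Hc Ha' Hb') as [_ K]. case_abs; lra.
Qed.

End Tensor.

Lemma is_squams_intro X : pseudometric X -> (forall x y, dist X x y = 0 -> x = y) ->
  bounded2 X -> sq1_le X -> sq2 X -> is_squams X.
Proof.
  intros HX Hsep Hb Hsq1 Hsq2. destruct HX as (Hpos & Hrefl & Hsym & Htri).
  split; [repeat split; assumption|]. split; [assumption|].
  split; [apply sq2_Smap_inj; [repeat split |]; assumption|]. split; [|assumption].
  intros i r s Hi Hr Hs. destruct (Hsq1 i r s Hi Hr Hs) as [K1 K2].
  pose proof (Hsq2 i r i s (inM0_vside i r Hi Hr) (inM0_vside i s Hi Hs)) as L1.
  pose proof (Hsq2 r i s i (inM0_hside i r Hi Hr) (inM0_hside i s Hi Hs)) as L2.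
  rewrite Rminus_diag, Rabs_R0, (Rabs_minus_sym r s) in L1, L2. split; lra.
Qed.

Section TensorMap.
Variables (P : Shape) (X Y : PreSq) (f : car X -> car Y).
Hypothesis Hf : is_hom X Y f.

Lemma tmap_tS r s : inM0 r s -> tmap P X Y f (tS P X r s) = tS P Y r s.
Proof.
  intros H. unfold tmap, tS; simpl. rewrite (proj2 Hf) by (apply inM0_local; assumption).
  reflexivity.
Qed.

Lemma dpre_tmap_le (u v : Tcar P X) : dpre P Y (tmap P X Y f u) (tmap P X Y f v) <= dpre P X u v.
Proof.
  unfold dpre, tmap; simpl. destruct (_ && _)%bool; [| lra].
  pose proof (proj1 Hf (snd u) (snd v)). lra.
Qed.

Lemma tmap_gen (u v : Tcar P X) : gen P X u v -> gen P Y (tmap P X Y f u) (tmap P X Y f v).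
Proof.
  intros (p1 & p2 & q1 & q2 & Hp & Hq & Hu & Hv & Hrest).
  exists p1, p2, q1, q2. simpl. rewrite Hu, Hv, !(proj2 Hf) by assumption. tauto.
Qed.

Lemma tmap_step (u v : Tcar P X) c : step P X u v c ->
  exists c', c' <= c /\ step P Y (tmap P X Y f u) (tmap P X Y f v) c'.
Proof.
  intros [-> | [-> Hgen]].
  - eexists; split; [apply dpre_tmap_le | left; reflexivity].
  - exists 0. split; [lra | right; split; [reflexivity|]].
    destruct Hgen; [left | right]; apply tmap_gen; assumption.
Qed.

Lemma tmap_chainsum (u v : Tcar P X) c : chainsum P X u v c ->
  exists c', c' <= c /\ chainsum P Y (tmap P X Y f u) (tmap P X Y f v) c'.
Proof.
  induction 1 as [u v c H | u w v c1 c2 H _ (c2' & Hle2 & Hc2')];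
  destruct (tmap_step _ _ _ H) as (c1' & Hle1 & Hc1').
  - exists c1'. split; [assumption | apply chain1; assumption].
  - exists (c1' + c2'). split; [lra | eapply chainS; eassumption].
Qed.

Lemma tmap_hom :
  pseudometric X -> pseudometric Y -> is_hom (tensor P X) (tensor P Y) (tmap P X Y f).
Proof.
  intros HX HY. split.
  - intros u v. simpl. apply (tdist_ge P X HX). intros c Hc.
    destruct (tmap_chainsum _ _ _ Hc) as (c' & Hle & Hc').
    eapply Rle_trans; [apply (tdist_le P Y HY); eassumption | exact Hle].
  - intros r s H. apply tmap_tS. assumption.
Qed.

End TensorMap.

Section MetricIdentification.
Context {T : Type} (d : T -> T -> R).

Definition mquot : Type := {E : T -> Prop | exists x, E = (fun y => d x y = 0)}.

Definition mclass (x : T) : mquot :=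
  exist _ (fun y => d x y = 0) (ex_intro _ x eq_refl).

Definition mrep (E : mquot) : T :=
  proj1_sig (constructive_indefinite_description _ (proj2_sig E)).

Definition mdist (E E' : mquot) : R := d (mrep E) (mrep E').

Hypothesis Hd : pseudometric_on d.

Let d_nonneg := proj1 Hd.
Let d_refl := proj1 (proj2 Hd).
Let d_sym := proj1 (proj2 (proj2 Hd)).
Let d_triangle := proj2 (proj2 (proj2 Hd)).

Lemma d_eq0_trans x y z : d x y = 0 -> d y z = 0 -> d x z = 0.
Proof. intros. pose proof (d_triangle x y z). pose proof (d_nonneg x z). lra. Qed.

Lemma mclass_eq x y : d x y = 0 -> mclass x = mclass y.
Proof.
  intros H. apply eq_sig_hprop; [intros; apply proof_irrelevance|]. simpl.
  apply functional_extensionality. intros z. apply propositional_extensionality.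
  split; intros; [rewrite d_sym in H|]; eapply d_eq0_trans; eassumption.
Qed.

Lemma mclass_mrep E : mclass (mrep E) = E.
Proof.
  apply eq_sig_hprop; [intros; apply proof_irrelevance|]. unfold mrep.
  destruct (constructive_indefinite_description _ _) as [x Hx]. simpl. symmetry; exact Hx.
Qed.

Lemma mrep_mclass x : d (mrep (mclass x)) x = 0.
Proof.
  pose proof (f_equal (fun E => proj1_sig E x) (mclass_mrep (mclass x))) as H. simpl in H.
  rewrite H. apply d_refl.
Qed.

Lemma mdist_mclass x y : mdist (mclass x) (mclass y) = d x y.
Proof.
  unfold mdist. pose proof (mrep_mclass x). pose proof (mrep_mclass y).
  pose proof (d_triangle (mrep (mclass x)) x (mrep (mclass y))).
  pose proof (d_triangle x (mrep (mclass x)) y).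
  pose proof (d_triangle x y (mrep (mclass y))).
  pose proof (d_triangle (mrep (mclass x)) (mrep (mclass y)) y).
  pose proof (d_sym x (mrep (mclass x))). pose proof (d_sym y (mrep (mclass y))). lra.
Qed.

Lemma mdist_eq0 E E' : mdist E E' = 0 -> E = E'.
Proof. intros H. rewrite <- (mclass_mrep E), <- (mclass_mrep E'). apply mclass_eq, H. Qed.

Lemma mdist_pseudometric : pseudometric_on mdist.
Proof. unfold mdist. repeat split; intros; apply Hd. Qed.

End MetricIdentification.

Section Colimit.
Variable P : Shape.
Hypothesis HP : has_border_cells P.

Lemma chain_props n : pseudometric (Ch P n) /\ bounded2 (Ch P n) /\ sq2 (Ch P n).
Proof.
  induction n as [|n (Hm & Hb & Hsq2)]; simpl.
  - split; [apply M0_pseudometric | split; [apply M0_bounded2 | apply M0_sq2]].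
  - split; [apply tensor_pseudometric | split; [apply tensor_bounded2 | apply tensor_sq2]];
    assumption.
Qed.

Lemma chain_pseudometric n : pseudometric (Ch P n).
Proof. apply chain_props. Qed.

Lemma chain_dist_refl n x : dist (Ch P n) x x = 0.
Proof. apply chain_pseudometric. Qed.

Lemma cmap_hom n : is_hom (Ch P n) (Ch P (S n)) (cmap P n).
Proof.
  induction n as [|n IH].
  - apply (M0_embed_hom (tensor P M0obj)).
    + apply tensor_pseudometric, M0_pseudometric.
    + apply tensor_sq1_le; [apply M0_pseudometric | assumption | apply M0_sq1_le].
  - apply tmap_hom; [assumption | apply chain_pseudometric ..].
Qed.

Definition coherent_from (f : forall n, car (Ch P n)) (k : nat) : Prop :=
  forall n, (k <= n)%nat -> f (S n) = cmap P n (f n).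

Record cseq : Type := {
  cseq_fun :> forall n, car (Ch P n);
  cseq_from : nat;
  cseq_coherent : coherent_from cseq_fun cseq_from
}.

Lemma coherent_from_le f k n : coherent_from f k -> (k <= n)%nat -> coherent_from f n.
Proof. intros H Hkn m Hm. apply H. lia. Qed.

Lemma cseq_coherent_le (f : cseq) n : (cseq_from f <= n)%nat -> coherent_from f n.
Proof. apply coherent_from_le, cseq_coherent. Qed.

Lemma dist_coherent_antitone (f g : forall n, car (Ch P n)) n m :
  coherent_from f n -> coherent_from g n -> (n <= m)%nat ->
  dist (Ch P m) (f m) (g m) <= dist (Ch P n) (f n) (g n).
Proof.
  intros Hf Hg Hnm. induction Hnm as [|m Hnm IH]; [lra|].
  rewrite Hf, Hg by assumption. eapply Rle_trans; [apply (proj1 (cmap_hom m)) | exact IH].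
Qed.

Definition cdist_levels (f g : cseq) (c : R) : Prop :=
  exists n, (cseq_from f <= n)%nat /\ (cseq_from g <= n)%nat /\
    c = dist (Ch P n) (f n) (g n).

Definition cdist (f g : cseq) : R := real (Glb_Rbar (cdist_levels f g)).

Lemma cdist_levels_nonneg f g c : cdist_levels f g c -> 0 <= c.
Proof. intros (n & _ & _ & ->). apply chain_pseudometric. Qed.

Lemma cdist_levels_max f g :
  cdist_levels f g (dist (Ch P (max (cseq_from f) (cseq_from g)))
                         (f (max (cseq_from f) (cseq_from g)))
                         (g (max (cseq_from f) (cseq_from g)))).
Proof. eexists; split; [| split; [| reflexivity]]; lia. Qed.

Lemma cdist_le f g n : (cseq_from f <= n)%nat -> (cseq_from g <= n)%nat ->
  cdist f g <= dist (Ch P n) (f n) (g n).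
Proof. intros. apply Glb_Rbar_real_le; [apply cdist_levels_nonneg | exists n; auto]. Qed.

Lemma cdist_ge f g b : (forall c, cdist_levels f g c -> b <= c) -> b <= cdist f g.
Proof. apply Glb_Rbar_real_ge with (1 := cdist_levels_max f g), cdist_levels_nonneg. Qed.

Lemma cdist_nonneg f g : 0 <= cdist f g.
Proof. apply cdist_ge, cdist_levels_nonneg. Qed.

Lemma cdist_refl f : cdist f f = 0.
Proof.
  apply Rle_antisym; [| apply cdist_nonneg].
  rewrite <- (chain_dist_refl (cseq_from f) (f (cseq_from f))). apply cdist_le; lia.
Qed.

Lemma cdist_sym f g : cdist f g = cdist g f.
Proof.
  assert (K : forall f g, cdist g f <= cdist f g).
  { intros f' g'. apply cdist_ge. intros c (n & Hf & Hg & ->).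
    rewrite (proj1 (proj2 (proj2 (chain_pseudometric n)))). apply cdist_le; assumption. }
  apply Rle_antisym; apply K.
Qed.

Lemma cdist_triangle f g h : cdist f h <= cdist f g + cdist g h.
Proof.
  apply (Glb_Rbar_real_le_add _ _ _ _ _ (cdist_levels_max f g) (cdist_levels_max g h));
    try apply cdist_levels_nonneg.
  intros c1 c2 (n1 & Hf1 & Hg1 & ->) (n2 & Hg2 & Hh2 & ->).
  set (N := max n1 n2).
  eapply Rle_trans; [apply (cdist_le _ _ N); lia|].
  eapply Rle_trans; [apply (chain_pseudometric N) with (y := g N)|].
  pose proof (dist_coherent_antitone f g n1 N
    (cseq_coherent_le f n1 Hf1) (cseq_coherent_le g n1 Hg1) ltac:(lia)).
  pose proof (dist_coherent_antitone g h n2 N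
    (cseq_coherent_le g n2 Hg2) (cseq_coherent_le h n2 Hh2) ltac:(lia)).
  lra.
Qed.

Lemma cdist_le2 f g : cdist f g <= 2.
Proof.
  eapply Rle_trans; [apply (cdist_le _ _ (max (cseq_from f) (cseq_from g))); lia|].
  apply chain_props.
Qed.

Lemma cdist_pseudometric : pseudometric_on cdist.
Proof.
  split; [apply cdist_nonneg | split; [apply cdist_refl | split; [apply cdist_sym |]]].
  apply cdist_triangle.
Qed.

Lemma cseq_class_eq_at (f g : cseq) n :
  (cseq_from f <= n)%nat -> (cseq_from g <= n)%nat -> f n = g n ->
  mclass cdist f = mclass cdist g.
Proof.
  intros Hf Hg E. apply (mclass_eq _ cdist_pseudometric), Rle_antisym; [| apply cdist_nonneg].
  eapply Rle_trans; [apply (cdist_le f g n); assumption|].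
  rewrite E, chain_dist_refl. lra.
Qed.

(* Below level [k] the values are irrelevant; only [n >= k] matters. *)
Fixpoint seq_of (k : nat) (x : car (Ch P k)) (n : nat) {struct n} : car (Ch P n) :=
  match Nat.eq_dec k n with
  | left e => eq_rect k (fun i => car (Ch P i)) x n e
  | right _ => match n return car (Ch P n) with
               | O => Smap (Ch P 0) 0 0
               | S n' => cmap P n' (seq_of k x n')
               end
  end.

Lemma seq_of_at k x : seq_of k x k = x.
Proof.
  destruct k; simpl; [reflexivity|];
  match goal with |- context [Nat.eq_dec ?a ?b] => destruct (Nat.eq_dec a b) as [e | n] end;
  try congruence; rewrite (UIP_dec Nat.eq_dec e eq_refl); reflexivity.
Qed.

Lemma seq_of_succ k x n : (k <= n)%nat -> seq_of k x (S n) = cmap P n (seq_of k x n).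
Proof. intros H. simpl. destruct (Nat.eq_dec k (S n)); [lia | reflexivity]. Qed.

Arguments seq_of : simpl never.

Definition cseq_of k x : cseq :=
  {| cseq_fun := seq_of k x; cseq_from := k; cseq_coherent := seq_of_succ k x |}.

Lemma seq_of_M0S r s n : inM0 r s -> seq_of 0 (M0S r s) n = Smap (Ch P n) r s.
Proof.
  intros H. induction n as [|n IH]; [apply seq_of_at|].
  rewrite seq_of_succ, IH by lia. apply (cmap_hom n), H.
Qed.

Definition colim_S (r s : R) : mquot cdist := mclass cdist (cseq_of 0 (M0S r s)).

Definition colim : PreSq := {| car := mquot cdist; dist := mdist cdist; Smap := colim_S |}.

Lemma colim_sq1_le : sq1_le colim.
Proof.
  intros i r s Hi Hr Hs. simpl. unfold colim_S.
  rewrite !(mdist_mclass _ cdist_pseudometric).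
  destruct (M0_sq1_le i r s Hi Hr Hs) as [K1 K2].
  split; (eapply Rle_trans; [apply (cdist_le _ _ 0); simpl; lia|]); simpl;
  rewrite !seq_of_at; assumption.
Qed.

Lemma colim_sq2 : sq2 colim.
Proof.
  intros r s t u Hrs Htu. simpl. unfold colim_S.
  rewrite (mdist_mclass _ cdist_pseudometric). apply cdist_ge.
  intros c (n & _ & _ & ->). simpl. rewrite !seq_of_M0S by assumption.
  apply chain_props; assumption.
Qed.

Lemma colim_squams : is_squams colim.
Proof.
  apply is_squams_intro.
  - apply mdist_pseudometric, cdist_pseudometric.
  - apply mdist_eq0, cdist_pseudometric.
  - intros E E'. apply cdist_le2.
  - apply colim_sq1_le.
  - apply colim_sq2.
Qed.

Definition shift_seq (m : Pt P) (f : forall n, car (Ch P n)) (n : nat) : car (Ch P n) :=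
  match n return car (Ch P n) with
  | O => Smap (Ch P 0) 0 0
  | S n' => ((m, f n') : car (Ch P (S n')))
  end.

Lemma shift_seq_coherent m (f : cseq) : coherent_from (shift_seq m f) (S (cseq_from f)).
Proof.
  intros [|n] Hn; [lia|]. simpl. rewrite (cseq_coherent f) by lia. reflexivity.
Qed.

Definition shift m (f : cseq) : cseq :=
  {| cseq_fun := shift_seq m f; cseq_from := S (cseq_from f);
     cseq_coherent := shift_seq_coherent m f |}.

Lemma cdist_shift_le m f g : cdist (shift m f) (shift m g) <= cdist f g / 3.
Proof.
  enough (3 * cdist (shift m f) (shift m g) <= cdist f g) by lra.
  apply cdist_ge. intros c (n & Hf & Hg & ->).
  pose proof (cdist_le (shift m f) (shift m g) (S n) ltac:(simpl; lia) ltac:(simpl; lia)).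
  pose proof (tdist_same_cell P (Ch P n) (chain_pseudometric n) (m, f n) (m, g n) eq_refl).
  simpl in *. lra.
Qed.

Definition colim_alg (u : car (tensor P colim)) : car colim :=
  mclass cdist (shift (fst u) (mrep cdist (snd u))).

Lemma colim_alg_mclass m f :
  colim_alg ((m, mclass cdist f) : car (tensor P colim)) = mclass cdist (shift m f).
Proof.
  apply (mclass_eq _ cdist_pseudometric), Rle_antisym; [| apply cdist_nonneg].
  eapply Rle_trans; [apply cdist_shift_le|]. simpl.
  rewrite (mrep_mclass _ cdist_pseudometric). lra.
Qed.

Lemma colim_alg_gen u v : gen P colim u v -> colim_alg u = colim_alg v.
Proof.
  intros (p1 & p2 & q1 & q2 & Hp & Hq & Hu & Hv & Hadj & E1 & E2).
  destruct u as [m E], v as [m' E']. simpl in *. subst E E'.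
  unfold colim_S. rewrite !colim_alg_mclass. apply (mclass_eq _ cdist_pseudometric).
  apply Rle_antisym; [| apply cdist_nonneg].
  eapply Rle_trans; [apply (cdist_le _ _ 1); simpl; lia|]. simpl.
  rewrite (tdist_gen P M0obj M0_pseudometric); [lra|].
  exists p1, p2, q1, q2. simpl. intuition.
Qed.

Lemma colim_pseudometric : pseudometric colim.
Proof. apply mdist_pseudometric, cdist_pseudometric. Qed.

Lemma colim_alg_step u v c : step P colim u v c -> dist colim (colim_alg u) (colim_alg v) <= c.
Proof.
  intros [-> | [-> Hgen]].
  - destruct (dpre_cases P colim u v) as [[Ecell ->] | [_ ->]]; [| apply cdist_le2].
    destruct u as [m E], v as [m' E']. simpl in *.
    assert (m = m') as <- by (apply eq_sig_hprop; [intros; apply proof_irrelevance | exact Ecell]).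
    unfold colim_alg. rewrite (mdist_mclass _ cdist_pseudometric). apply cdist_shift_le.
  - destruct Hgen as [Hgen | Hgen];
    rewrite (colim_alg_gen _ _ Hgen), (proj1 (proj2 colim_pseudometric)); lra.
Qed.

Lemma colim_alg_hom : is_hom (tensor P colim) colim colim_alg.
Proof.
  split.
  - intros u v. apply (tdist_ge P colim colim_pseudometric). intros c Hc.
    induction Hc as [u v c H | u w v c1 c2 H _ IH]; [apply colim_alg_step, H|].
    pose proof (colim_alg_step _ _ _ H).
    pose proof (proj2 (proj2 (proj2 colim_pseudometric)) (colim_alg u) (colim_alg w) (colim_alg v)).
    lra.
  - intros r s H. simpl. unfold tS; simpl. unfold colim_S. rewrite colim_alg_mclass.
    apply (cseq_class_eq_at _ _ 1); simpl; [lia | lia|].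
    rewrite seq_of_at, seq_of_M0S by assumption. reflexivity.
Qed.

Definition colim_inj (k : nat) (x : car (Ch P k)) : car colim := mclass cdist (cseq_of k x).

Lemma colim_inj_cocone : cocone P colim colim_inj.
Proof.
  split; [intros k; split|].
  - intros x y. simpl. unfold colim_inj. rewrite (mdist_mclass _ cdist_pseudometric).
    eapply Rle_trans; [apply (cdist_le _ _ k); simpl; lia|]. simpl. rewrite !seq_of_at. lra.
  - intros r s H. apply (cseq_class_eq_at _ _ k); simpl; [lia | lia|].
    rewrite seq_of_at, seq_of_M0S by assumption. reflexivity.
  - intros k x. apply (cseq_class_eq_at _ _ (S k)); simpl; [lia | lia|].
    rewrite (seq_of_succ k x k), !seq_of_at by lia. reflexivity.
Qed.

Lemma colim_inj_surj (E : car colim) : exists k x, E = colim_inj k x.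
Proof.
  rewrite <- (mclass_mrep cdist E). set (f := mrep cdist E).
  exists (cseq_from f), (f (cseq_from f)).
  apply (cseq_class_eq_at _ _ (cseq_from f)); simpl; [lia | lia | symmetry; apply seq_of_at].
Qed.

Section UniversalProperty.
Variables (B : PreSq) (h : forall k, car (Ch P k) -> car B).
Hypotheses (HB : is_squams B) (Hh : cocone P B h).

Definition cseq_lim (f : cseq) : car B := h (cseq_from f) (f (cseq_from f)).

Lemma cocone_coherent (f : forall n, car (Ch P n)) k n :
  coherent_from f k -> (k <= n)%nat -> h n (f n) = h k (f k).
Proof.
  intros Hf Hkn. induction Hkn as [|n Hkn IH]; [reflexivity|].
  rewrite Hf, (proj2 Hh) by assumption. exact IH.
Qed.

Lemma cseq_lim_at (f : cseq) n : (cseq_from f <= n)%nat -> cseq_lim f = h n (f n).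
Proof. intros Hn. symmetry. apply cocone_coherent; [apply cseq_coherent | assumption]. Qed.

Lemma dist_cseq_lim_le f g : dist B (cseq_lim f) (cseq_lim g) <= cdist f g.
Proof.
  apply cdist_ge. intros c (n & Hf & Hg & ->).
  rewrite (cseq_lim_at f n), (cseq_lim_at g n) by assumption. apply (proj1 Hh n).
Qed.

Definition colim_lift (E : car colim) : car B := cseq_lim (mrep cdist E).

Lemma colim_lift_mclass f : colim_lift (mclass cdist f) = cseq_lim f.
Proof.
  destruct (squams_pseudometric B HB) as [Hpos _]. destruct HB as [[_ [_ [Hsep _]]] _].
  apply Hsep, Rle_antisym; [| apply Hpos].
  rewrite <- (mrep_mclass _ cdist_pseudometric f). apply dist_cseq_lim_le.
Qed.

Lemma colim_lift_inj k x : colim_lift (colim_inj k x) = h k x.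
Proof.
  unfold colim_inj. rewrite colim_lift_mclass, (cseq_lim_at _ k) by (simpl; lia).
  simpl. rewrite seq_of_at. reflexivity.
Qed.

Lemma colim_lift_hom : is_hom colim B colim_lift.
Proof.
  split.
  - intros E E'. apply dist_cseq_lim_le.
  - intros r s H. simpl. unfold colim_S.
    rewrite colim_lift_mclass, (cseq_lim_at _ 0) by (simpl; lia).
    apply (proj1 Hh 0%nat), H.
Qed.

Lemma colim_lift_unique u : (forall k x, u (colim_inj k x) = h k x) ->
  forall E, u E = colim_lift E.
Proof.
  intros Hu E. destruct (colim_inj_surj E) as (k & x & ->). rewrite Hu, colim_lift_inj. reflexivity.
Qed.

End UniversalProperty.

Lemma colim_is_colimit : is_colimit P colim colim_inj.
Proof.
  split; [apply colim_squams | split; [apply colim_inj_cocone |]].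
  intros B h HB Hh. exists (colim_lift B h).
  split; [apply colim_lift_hom; assumption | split].
  - apply colim_lift_inj; assumption.
  - intros u' _ Hu'. apply colim_lift_unique; assumption.
Qed.

Lemma colim_inj_succ (m : Pt P) k (y : car (Ch P k)) :
  colim_inj (S k) ((m, y) : car (Ch P (S k))) = colim_alg (m, colim_inj k y).
Proof.
  unfold colim_inj. rewrite colim_alg_mclass.
  apply (cseq_class_eq_at _ _ (S k)); simpl; [lia | lia|].
  rewrite !seq_of_at. reflexivity.
Qed.

Lemma colim_inj_0 (x : car M0obj) : colim_inj 0 x = M0_embed colim x.
Proof. rewrite <- (M0S_proj x) at 1. reflexivity. Qed.

Section Initiality.
Variables (B : PreSq) (b : car (tensor P B) -> car B).
Hypothesis Hb : is_alg P B b.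

Fixpoint alg_cocone (k : nat) : car (Ch P k) -> car B :=
  match k with
  | O => M0_embed B
  | S k' => fun u => b (tmap P (Ch P k') B (alg_cocone k') u)
  end.

Lemma alg_cocone_succ k (m : Pt P) (y : car (Ch P k)) :
  alg_cocone (S k) ((m, y) : car (Ch P (S k))) = b (m, alg_cocone k y).
Proof. reflexivity. Qed.

Lemma alg_cocone_hom k : is_hom (Ch P k) B (alg_cocone k).
Proof.
  destruct Hb as [HBsq Hbhom]. pose proof (squams_pseudometric B HBsq) as HB.
  induction k as [|k IH].
  - apply M0_embed_hom; [assumption | apply squams_sq1_le, HBsq].
  - apply (is_hom_comp _ (tensor P B)); [| exact Hbhom].
    apply tmap_hom; [exact IH | apply chain_pseudometric | exact HB].
Qed.

Lemma alg_cocone_compat k x : alg_cocone (S k) (cmap P k x) = alg_cocone k x.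
Proof.
  induction k as [|k IH].
  - destruct x as [[r s] H]. simpl. unfold bang. simpl.
    rewrite (tmap_tS P M0obj B (M0_embed B) (alg_cocone_hom 0)) by assumption.
    apply (proj2 (proj2 Hb)), H.
  - destruct x as [m y].
    change (cmap P (S k) (m, y)) with ((m, cmap P k y) : car (Ch P (S (S k)))).
    rewrite !alg_cocone_succ, IH. reflexivity.
Qed.

Lemma alg_cocone_cocone : cocone P B alg_cocone.
Proof. split; [apply alg_cocone_hom | apply alg_cocone_compat]. Qed.

Lemma alg_hom_on_inj h' : alg_hom P colim colim_alg B b h' ->
  forall k x, h' (colim_inj k x) = alg_cocone k x.
Proof.
  intros [[_ Hh'S] Hcomm] k. induction k as [|k IH]; intros x.
  - rewrite colim_inj_0. destruct x as [[r s] H]. apply Hh'S, H.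
  - destruct x as [m y]. rewrite colim_inj_succ, Hcomm, alg_cocone_succ, <- IH. reflexivity.
Qed.

Lemma colim_lift_alg_hom : alg_hom P colim colim_alg B b (colim_lift B alg_cocone).
Proof.
  split; [apply colim_lift_hom; [apply Hb | apply alg_cocone_cocone]|].
  intros [m E]. destruct (colim_inj_surj E) as (k & y & ->). unfold tmap; cbn [fst snd].
  rewrite <- colim_inj_succ, !colim_lift_inj by (apply Hb || apply alg_cocone_cocone).
  reflexivity.
Qed.

End Initiality.

Lemma colim_initial : initial_alg P colim colim_alg.
Proof.
  split; [split; [apply colim_squams | apply colim_alg_hom]|].
  intros B b Hb. exists (colim_lift B (alg_cocone B b)). split.
  - apply colim_lift_alg_hom, Hb.
  - intros h' Hh'. apply colim_lift_unique; [apply Hb | apply alg_cocone_cocone, Hb |].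
    apply alg_hom_on_inj, Hh'.
Qed.

End Colimit.

Theorem mainTheorem3 :
  forall P : Shape, P = shapeM \/ P = shapeN ->
  exists (A : PreSq) (a : car (tensor P A) -> car A)
         (g : forall k, car (Ch P k) -> car A),
    initial_alg P A a /\ is_colimit P A g.
Proof.
  intros P HP.
  assert (Hborder : has_border_cells P)
    by (destruct HP as [-> | ->]; [apply shapeM_border | apply shapeN_border]).
  exists (colim P), (colim_alg P), (colim_inj P).
  split; [apply colim_initial | apply colim_is_colimit]; assumption.
Qed.
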